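(* Let $\Gamma$ be the subgroup of $\Gamma^6$ generated by $A$ and $\mathrm{H}$. Then $\mathrm{H}$ is normal in $\Gamma$, and the quotient group $\Gamma/\mathrm{H}$ is cyclic of order $8$, generated by the coset $\mathrm{H}A$.
   Context: Let $\langle x,y\rangle=x_1y_1+\dots+x_6y_6-x_7y_7$ on $\mathbb{R}^7$, $H^6=\{x:\langle x,x\rangle=-1,x_7>0\}$, and $e_1,\dots,e_7$ the standard basis. $\Gamma^6=PO_{6,1}\mathbb{Z}$ is the group of $7\times7$ integer matrices preserving $\langle\cdot,\cdot\rangle$ and mapping $H^6$ to itself. $\mathrm{K}^6$ is the group of the $64$ matrices $\mathrm{diag}(\varepsilon_1,\dots,\varepsilon_6,1)$, $\varepsilon_i=\pm1$. Define vectors $u_1,\dots,u_{27}$: $u_i=-e_i$ for $1\le i\le 6$; $u_7,\dots,u_{21}$ are $e_a+e_b+e_7$ for the pairs $(a,b)=(1,2),(1,3),(2,3),(1,4),(2,4),(3,4),(1,5),(2,5),(3,5),(4,5),(1,6),(2,6),(3,6),(4,6),(5,6)$ in this order; $u_{22},\dots,u_{27}$ are $\sum_{i=1}^6e_i-e_c+2e_7$ for $c=6,5,4,3,2,1$ in this order. Let $R_j$ be the reflection $x\mapsto x-2\langle x,u_j\rangle u_j$. For $7\le j\le27$ let $k_j\in\mathrm{K}^6$ be the matrix with $\varepsilon_i=-1$ exactly for $i\in N_j$, where $N_7=\{2,3,5\}$, $N_8=\{1,2,3,4,5\}$, $N_9=\{3,4,5\}$, $N_{10}=\{1,2,3,5,6\}$,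 $N_{11}=\{1,4,6\}$, $N_{12}=\{2,3,5\}$, $N_{13}=\{3,4,5\}$, $N_{14}=\{1,2,5\}$, $N_{15}=\{5\}$, $N_{16}=\{2,4,6\}$, $N_{17}=\{1,2,5\}$, $N_{18}=\{2,4,6\}$, $N_{19}=\{6\}$, $N_{20}=\{1,3,4\}$, $N_{21}=\{1,2,3,5,6\}$, $N_{22}=\{1,3,4\}$, $N_{23}=\{2\}$, $N_{24}=\{1,4,6\}$, $N_{25}=\{1,2,3,4,5\}$, $N_{26}=\{4\}$, $N_{27}=\{3\}$. Let $\mathrm{H}$ be the subgroup of $\Gamma^6$ generated by all matrices $\ell R_j\ell k_j$ with $\ell\in\mathrm{K}^6$ and $7\le j\le 27$. Let $A=\begin{pmatrix}1&0&0&0&0&0&0\\0&1&0&0&1&0&-1\\0&0&0&0&0&1&0\\0&-1&0&-1&0&0&1\\0&0&1&0&0&0&0\\0&0&0&-1&-1&0&1\\0&-1&0&-1&-1&0&2\end{pmatrix}.$ *)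

(* 7x7 integer matrices, indices 1..7 of the paper are ordinals 0..6. *)
From mathcomp Require Import all_boot all_order all_algebra.
Set Implicit Arguments. Unset Strict Implicit. Unset Printing Implicit Defensive.
Import Order.TTheory GRing.Theory Num.Theory.
Local Open Scope ring_scope.

Notation mat7 := 'M[int]_7.

Definition evec (i : nat) : 'cV[int]_7 := \col_(k < 7) ((k.+1 == i)%N)%:R.

(* Lorentzian form matrix J = diag(1,...,1,-1); <x,y> = x^T J y *)
Definition Jmat : mat7 := \matrix_(i < 7, j < 7) (if i == j then (if (i.+1 == 7)%N then -1 else 1) else 0).

Definition pairs_ab : seq (nat * nat) :=
  [:: (1,2); (1,3); (2,3); (1,4); (2,4); (3,4); (1,5); (2,5); (3,5); (4,5);
      (1,6); (2,6); (3,6); (4,6); (5,6)].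
Definition list_c : seq nat := [:: 6; 5; 4; 3; 2; 1].

Definition u (j : nat) : 'cV[int]_7 :=
  if (1 <= j <= 6)%N then - evec j
  else if (7 <= j <= 21)%N then
    let ab := nth (0,0)%N pairs_ab (j - 7) in evec ab.1 + evec ab.2 + evec 7
  else if (22 <= j <= 27)%N then
    let c := nth 0%N list_c (j - 22) in
    \sum_(1 <= i < 7) evec i - evec c + 2%:R *: evec 7
  else 0.

(* reflection R_j : x |-> x - 2 <x,u_j> u_j, as a matrix: 1 - 2 u_j u_j^T J *)
Definition R (j : nat) : mat7 := 1%:M - 2%:R *: (u j *m ((u j)^T *m Jmat)).

Definition Kmat (N : seq nat) : mat7 :=
  \matrix_(i < 7, j < 7) (if i == j then (if (i.+1 \in N) then -1 else 1) else 0).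

Definition Kof (s : {ffun 'I_6 -> bool}) : mat7 :=
  \matrix_(i < 7, j < 7)
    (if i == j then (if (i < 6)%N && s (inord i) then -1 else 1) else 0).

Definition Nset (j : nat) : seq nat :=
  nth [::] [:: [:: 2; 3; 5]; [:: 1; 2; 3; 4; 5]; [:: 3; 4; 5]; [:: 1; 2; 3; 5; 6];
    [:: 1; 4; 6]; [:: 2; 3; 5]; [:: 3; 4; 5]; [:: 1; 2; 5]; [:: 5]; [:: 2; 4; 6];
    [:: 1; 2; 5]; [:: 2; 4; 6]; [:: 6]; [:: 1; 3; 4]; [:: 1; 2; 3; 5; 6];
    [:: 1; 3; 4]; [:: 2]; [:: 1; 4; 6]; [:: 1; 2; 3; 4; 5]; [:: 4]; [:: 3]]%N (j - 7).

Definition kmat (j : nat) : mat7 := Kmat (Nset j).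

Inductive gen (S : mat7 -> Prop) : mat7 -> Prop :=
  | gen1 : gen S 1
  | genM g s : gen S g -> S s -> gen S (g * s)
  | genV g s : gen S g -> S s -> gen S (g * s^-1).

Definition Hgens (M : mat7) : Prop :=
  exists (s : {ffun 'I_6 -> bool}) (j : nat),
    (7 <= j <= 27)%N /\ M = Kof s * R j * Kof s * kmat j.

Definition Hgrp : mat7 -> Prop := gen Hgens.

Definition Amat : mat7 :=
  \matrix_(i < 7, j < 7) nth 0 (nth [::] [::
    [:: 1; 0; 0; 0; 0; 0; 0];
    [:: 0; 1; 0; 0; 1; 0; -1];
    [:: 0; 0; 0; 0; 0; 1; 0];
    [:: 0; -1; 0; -1; 0; 0; 1];
    [:: 0; 0; 1; 0; 0; 0; 0];
    [:: 0; 0; 0; -1; -1; 0; 1];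
    [:: 0; -1; 0; -1; -1; 0; 2]] i) j.

Definition Gamma : mat7 -> Prop := gen (fun M => M = Amat \/ Hgrp M).

Definition normal_in (N G : mat7 -> Prop) : Prop :=
  forall g h, G g -> N h -> N (g * h * g^-1).

Definition quotient_cyclic_gen (G N : mat7 -> Prop) (a : mat7) (n : nat) : Prop :=
  (forall g, G g -> exists k : nat, N (g * (a ^+ k)^-1)) /\
  (forall k : nat, N (a ^+ k) <-> (n %| k)%N).

From mathcomp Require Import all_boot all_order all_algebra.
Set Implicit Arguments. Unset Strict Implicit. Unset Printing Implicit Defensive.
Import Order.TTheory GRing.Theory Num.Theory.
Local Open Scope ring_scope.

(* H lies in the level-2 congruence subgroup, since each generator l R_j l k_j is
   congruent to 1 mod 2, whereas A^r is not for 0 < r < 8; so A^r is not in H.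
   Conversely A^8 and the conjugates by A of the generators of H are written as words
   in the generators by a descent in H^6: while g e_7 <> e_7, strip from g a generator
   whose mirror separates g e_7 from e_7, which lowers the last coordinate of g e_7.
   Then A normalises H (A^-1 h A = A^7 (A^-8 h A^8) A^-7), every element of Gamma lies
   in a coset H A^k, and Gamma/H is cyclic of order 8, generated by HA. *)

Section GeneratedSubgroup.

Variable S : mat7 -> Prop.
Hypothesis S_unit : forall s, S s -> s \is a GRing.unit.

Lemma gen_mul a b : gen S a -> gen S b -> gen S (a * b).
Proof.
move=> Sa; elim=> [|g s _ IH Ss|g s _ IH Ss]; first by rewrite mulr1.
  by rewrite mulrA; apply: genM.
by rewrite mulrA; apply: genV.
Qed.

Lemma gen_gen s : S s -> gen S s.
Proof. by move=> Ss; rewrite -[s]mul1r; apply: genM => //; apply: gen1. Qed.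

Lemma gen_exp a n : gen S a -> gen S (a ^+ n).
Proof.
move=> Sa; elim: n => [|n IH]; first by rewrite expr0; apply: gen1.
by rewrite exprS; apply: gen_mul.
Qed.

Lemma gen_unit a : gen S a -> a \is a GRing.unit.
Proof.
elim=> [|g s _ Ug Ss|g s _ Ug Ss]; first exact: unitr1.
  by rewrite unitrMr // S_unit.
by rewrite unitrMr ?unitrV // S_unit.
Qed.

Lemma gen_inv a : gen S a -> gen S a^-1.
Proof.
elim=> [|g s Sg IH Ss|g s Sg IH Ss]; first by rewrite invr1; apply: gen1.
- have [Ug Us] := (gen_unit Sg, S_unit Ss).
  rewrite invrM //; apply: gen_mul _ IH.
  by rewrite -[s^-1]mul1r; apply: genV => //; apply: gen1.
- have [Ug Us] := (gen_unit Sg, S_unit Ss).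
  by rewrite invrM ?unitrV // invrK; apply: gen_mul (gen_gen Ss) IH.
Qed.

End GeneratedSubgroup.

Definition one_mod2 (R : pzRingType) (x : R) := exists y : R, x = 1 + y *+ 2.

Lemma one_mod2M (R : pzRingType) (x y : R) :
  one_mod2 x -> one_mod2 y -> one_mod2 (x * y).
Proof.
move=> [x' ->] [y' ->]; exists (x' + y' + (x' * y') *+ 2).
by rewrite mulrDl mul1r mulrDr mulr1 mulrnAl mulrnAr !mulrnDl -!addrA !(addrCA y' x').
Qed.

Lemma one_mod2V (R : unitRingType) (x : R) :
  x \is a GRing.unit -> one_mod2 x -> one_mod2 x^-1.
Proof.
move=> Ux [y defx]; exists (- (y * x^-1)).
have e : x^-1 + (y * x^-1) *+ 2 = 1.
  by rewrite -mulrnAl -{1}(mul1r x^-1) -mulrDl -defx mulrV.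
by rewrite mulNrn -e addrK.
Qed.

Lemma gen_one_mod2 (S : mat7 -> Prop) :
    (forall s, S s -> s \is a GRing.unit) -> (forall s, S s -> one_mod2 s) ->
  forall a, gen S a -> one_mod2 a.
Proof.
move=> S_unit S_mod2 a; elim=> [|g s _ IH Ss|g s _ IH Ss].
- by exists 0; rewrite mul0rn addr0.
- exact: one_mod2M IH (S_mod2 _ Ss).
- exact: one_mod2M IH (one_mod2V (S_unit _ Ss) (S_mod2 _ Ss)).
Qed.

Section CyclicExtension.

Variables (S : mat7 -> Prop) (a : mat7) (n : nat).
Hypothesis S_unit : forall s, S s -> s \is a GRing.unit.
Hypothesis a_unit : a \is a GRing.unit.
Hypothesis conj_gens : forall s, S s -> gen S (a * s * a^-1).
Hypothesis n_gt0 : (0 < n)%N.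
Hypothesis gen_exp_n : gen S (a ^+ n).

Let G := gen (fun g => g = a \/ gen S g).

Lemma gen_conj h : gen S h -> gen S (a * h * a^-1).
Proof.
elim=> [|g s _ IH Ss|g s _ IH Ss]; first by rewrite mulr1 mulrV //; apply: gen1.
- have -> : a * (g * s) * a^-1 = a * g * a^-1 * (a * s * a^-1) by rewrite !mulrA mulrVK.
  exact: gen_mul IH (conj_gens Ss).
- have -> : a * (g * s^-1) * a^-1 = a * g * a^-1 * (a * s * a^-1)^-1.
    have Us := S_unit Ss.
    by rewrite !invrM ?unitrMl ?unitrV // invrK !mulrA mulrVK.
  exact: gen_mul IH (gen_inv S_unit (conj_gens Ss)).
Qed.

Lemma gen_conjX k h : gen S h -> gen S (a ^+ k * h * (a ^+ k)^-1).
Proof.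
move=> Sh; elim: k => [|k IH]; first by rewrite expr0 invr1 mul1r mulr1.
rewrite exprS invrM ?unitrX //.
have -> : a * a ^+ k * h * ((a ^+ k)^-1 * a^-1) = a * (a ^+ k * h * (a ^+ k)^-1) * a^-1.
  by rewrite !mulrA.
exact: gen_conj.
Qed.

Lemma gen_conjV h : gen S h -> gen S (a^-1 * h * a).
Proof.
move=> Sh.
have -> : a^-1 * h * a =
    a ^+ n.-1 * ((a ^+ n.-1.+1)^-1 * h * a ^+ n.-1.+1) * (a ^+ n.-1)^-1.
  rewrite exprS invrM ?unitrX // !mulrA mulrV ?unitrX //.
  by rewrite mul1r mulrK ?unitrX.
rewrite prednK //.
apply: gen_conjX; apply: gen_mul gen_exp_n.
exact: gen_mul (gen_inv S_unit gen_exp_n) Sh.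
Qed.

Let normalizes g := g \is a GRing.unit /\
  forall h, gen S h -> gen S (g * h * g^-1) /\ gen S (g^-1 * h * g).

Lemma normalizesM g g' : normalizes g -> normalizes g' -> normalizes (g * g').
Proof.
move=> [Ug Ng] [Ug' Ng']; split=> [|h Sh]; first by rewrite unitrMl.
rewrite invrM //; split.
  have -> : g * g' * h * (g'^-1 * g^-1) = g * (g' * h * g'^-1) * g^-1 by rewrite !mulrA.
  by have [Sh' _] := Ng' h Sh; have [] := Ng _ Sh'.
have -> : g'^-1 * g^-1 * h * (g * g') = g'^-1 * (g^-1 * h * g) * g' by rewrite !mulrA.
by have [_ Sh'] := Ng h Sh; have [] := Ng' _ Sh'.
Qed.

Lemma normalizesV g : normalizes g -> normalizes g^-1.
Proof.
move=> [Ug Ng]; split=> [|h Sh]; first by rewrite unitrV.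
by rewrite invrK; have [] := Ng h Sh.
Qed.

Lemma normalizes_gen g : gen S g -> normalizes g.
Proof.
move=> Sg; split=> [|h Sh]; first by apply: (gen_unit S_unit Sg).
have Sg' := gen_inv S_unit Sg.
by split; apply: gen_mul; try apply: gen_mul.
Qed.

Lemma normal_in_gen_cyclic : normal_in (gen S) G.
Proof.
have Na : normalizes a by split=> // h Sh; split; [exact: gen_conj|exact: gen_conjV].
have Ngens g : g = a \/ gen S g -> normalizes g.
  by case=> [->|]; [exact: Na|exact: normalizes_gen].
suff NG x : G x -> normalizes x by move=> x h /NG [_ Nx] /Nx [].
elim=> [|g s _ Ng Ss|g s _ Ng Ss].
- by split=> [|h Sh]; rewrite ?invr1 ?mul1r ?mulr1 ?unitr1.
- exact: normalizesM Ng (Ngens _ Ss).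
- exact: normalizesM Ng (normalizesV (Ngens _ Ss)).
Qed.

Lemma gen_cyclic_coset g : G g -> exists k : nat, gen S (g * (a ^+ k)^-1).
Proof.
have shift k g' s : g' * s * (a ^+ k)^-1 = g' * (a ^+ k)^-1 * (a ^+ k * s * (a ^+ k)^-1).
  by rewrite !mulrA mulrVK ?unitrX.
elim=> [|g' s _ [k Sk] Ss|g' s _ [k Sk] Ss].
- by exists 0%N; rewrite expr0 invr1 mulr1; apply: gen1.
- case: Ss => [->|Ss].
    by exists k.+1; rewrite exprSr invrM ?unitrX // mulrA mulrK.
  by exists k; rewrite shift; apply: gen_mul Sk (gen_conjX k Ss).
- case: Ss => [->|Ss].
    exists (k + n.-1)%N.
    have -> : g' * a^-1 * (a ^+ (k + n.-1))^-1 = g' * (a ^+ k)^-1 * (a ^+ n)^-1.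
      rewrite -mulrA -invrM ?unitrX // -exprSr -addnS prednK // addnC exprD.
      by rewrite invrM ?unitrX // mulrA.
    exact: gen_mul Sk (gen_inv S_unit gen_exp_n).
  by exists k; rewrite shift; apply: gen_mul Sk (gen_conjX k (gen_inv S_unit Ss)).
Qed.

Lemma gen_exp_dvdn : (forall r, (0 < r < n)%N -> ~ gen S (a ^+ r)) ->
  forall k, gen S (a ^+ k) <-> (n %| k)%N.
Proof.
move=> short k; split=> [Sk|/dvdnP [q ->]]; last first.
  by rewrite mulnC exprM; apply: gen_exp.
have Smod : gen S (a ^+ (k %% n)).
  have -> : a ^+ (k %% n) = (a ^+ (k %/ n * n))^-1 * a ^+ k.
    by rewrite {3}(divn_eq k n) exprD mulKr ?unitrX.
  by apply: gen_mul Sk; apply: gen_inv => //; rewrite mulnC exprM; apply: gen_exp.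
rewrite /dvdn; case: (posnP (k %% n)) => // pos.
by case: (short (k %% n)%N _ Smod); rewrite pos ltn_pmod.
Qed.

End CyclicExtension.

(* 7x7 integer matrices as lists of rows, on which vm_compute evaluates products. *)
Definition lmx := seq (seq int).

Definition lmx_entry (l : lmx) (i j : nat) : int := nth 0 (nth [::] l i) j.

Definition mx_of_lmx (l : lmx) : mat7 := \matrix_(i < 7, j < 7) lmx_entry l i j.

Definition lmx_of_fun (f : nat -> nat -> int) : lmx := mkseq (fun i => mkseq (f i) 7) 7.

Definition sum7 (f : nat -> int) : int := foldr (fun k s => f k + s) 0 (iota 0 7).

Definition lmx_mul (a b : lmx) : lmx :=
  lmx_of_fun (fun i j => sum7 (fun k => lmx_entry a i k * lmx_entry b k j)).

Definition lmx1 : lmx := lmx_of_fun (fun i j => (i == j)%:R).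

Lemma lmx_entry_of_fun f i j :
  (i < 7)%N -> (j < 7)%N -> lmx_entry (lmx_of_fun f) i j = f i j.
Proof. by move=> lti ltj; rewrite /lmx_entry nth_mkseq // nth_mkseq. Qed.

Lemma mx_of_lmx_of_fun f : mx_of_lmx (lmx_of_fun f) = \matrix_(i < 7, j < 7) f i j.
Proof. by apply/matrixP=> i j; rewrite !mxE lmx_entry_of_fun. Qed.

Lemma sum7E (F : nat -> int) : \sum_(k < 7) F k = sum7 F.
Proof. by rewrite -(big_mkord xpredT) /index_iota /= !big_cons big_nil. Qed.

Lemma mx_of_lmx_mul a b : mx_of_lmx (lmx_mul a b) = mx_of_lmx a * mx_of_lmx b.
Proof.
apply/matrixP=> i j; rewrite mx_of_lmx_of_fun !mxE -sum7E.
by apply: eq_bigr => k _; rewrite !mxE.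
Qed.

Lemma mx_of_lmx1 : mx_of_lmx lmx1 = 1.
Proof. by apply/matrixP=> i j; rewrite mx_of_lmx_of_fun !mxE. Qed.

Definition one_mod2_lmx (l : lmx) : bool :=
  all (fun i => all (fun j => (2 %| lmx_entry l i j - (i == j)%:R)%Z) (iota 0 7)) (iota 0 7).

Lemma one_mod2_lmxP l : one_mod2 (mx_of_lmx l) <-> one_mod2_lmx l.
Proof.
split=> [[X defl]|odd_l].
  apply/allP=> i; rewrite mem_iota => /andP [_ lti].
  apply/allP=> j; rewrite mem_iota => /andP [_ ltj].
  have := congr1 (fun M : mat7 => M (Ordinal lti) (Ordinal ltj)) defl.
  rewrite !mxE /= => ->; rewrite addrAC subrr add0r.
  by apply/dvdzP; exists (X (Ordinal lti) (Ordinal ltj)); rewrite mulr_natr mulr2n.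
exists (\matrix_(i < 7, j < 7) ((lmx_entry l i j - (i == j :> nat)%:R) %/ 2)%Z).
apply/matrixP=> i j; rewrite !mxE.
have in7 (k : 'I_7) : (k : nat) \in iota 0 7 by rewrite mem_iota ltn_ord.
have /divzK dvd := allP (allP odd_l i (in7 i)) j (in7 j).
rewrite -mulr2n -[_ *+ 2]mulr_natr [_ * _]dvd.
by rewrite addrC subrK.
Qed.

Definition sign_lmx (f : nat -> bool) : lmx :=
  lmx_of_fun (fun i j => if i == j then (if f i then -1 else 1) else 0).

Definition Kof_lmx (bs : seq bool) : lmx := sign_lmx (fun i => (i < 6)%N && nth false bs i).

Definition kmat_lmx (j : nat) : lmx := sign_lmx (fun i => i.+1 \in Nset j).

Definition signs_of (s : {ffun 'I_6 -> bool}) : seq bool := mkseq (fun i => s (inord i)) 6.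

Lemma KofE s : Kof s = mx_of_lmx (Kof_lmx (signs_of s)).
Proof.
apply/matrixP=> i j; rewrite mx_of_lmx_of_fun !mxE.
by case: (ltnP i 6) => //= lti; rewrite nth_mkseq.
Qed.

Lemma signs_ofK bs : size bs = 6%N -> signs_of [ffun i : 'I_6 => nth false bs i] = bs.
Proof.
move=> size_bs; apply: (@eq_from_nth _ false); first by rewrite size_mkseq.
by move=> i; rewrite size_mkseq => lti; rewrite nth_mkseq // ffunE inordK.
Qed.

Lemma kmatE j : kmat j = mx_of_lmx (kmat_lmx j).
Proof. by apply/matrixP=> i k; rewrite mx_of_lmx_of_fun !mxE. Qed.

Fixpoint bool_seqs (n : nat) : seq (seq bool) :=
  if n is n'.+1 then [seq b :: bs | b <- [:: false; true], bs <- bool_seqs n'] else [:: [::]].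

Lemma mem_bool_seqs n bs : (bs \in bool_seqs n) = (size bs == n).
Proof.
elim: n bs => [|n IH] [|b bs] //.
  by apply/negbTE/allpairsP => -[[? ?] []].
rewrite eqSS -IH; apply/allpairsP/idP => [[[b' bs'] [_ ? [_ ->]]] //|bs_n].
by exists (b, bs); case: b.
Qed.

(* Valid for 7 <= j <= 27, the range of the u_j occurring in the generators of H. *)
Definition u_lmx (j : nat) : seq int :=
  if (j <= 21)%N then
    let ab := nth (0, 0)%N pairs_ab (j - 7) in
    mkseq (fun k => (k.+1 == ab.1)%:R + (k.+1 == ab.2)%:R + (k.+1 == 7)%:R) 7
  else
    let c := nth 0%N list_c (j - 22) in
    mkseq (fun k => (k.+1 < 7)%:R - (k.+1 == c)%:R + 2%:R * (k.+1 == 7)%:R) 7.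

Lemma uE j : (7 <= j <= 27)%N -> u j = \col_(k < 7) nth 0 (u_lmx j) k.
Proof.
case/andP=> j_ge7 j_le27; apply/matrixP=> k z; rewrite (ord1 z) !mxE /u /u_lmx.
rewrite ifF; last by apply/negbTE/andP => -[_ /(leq_trans j_ge7)].
rewrite j_ge7 /=; case: (leqP j 21) => [_|j_gt21]; first by rewrite nth_mkseq // !mxE.
rewrite ifT ?j_le27 // nth_mkseq // !mxE summxE.
congr (_ - _ + _); under eq_bigr do rewrite mxE.
case: k => [[|[|[|[|[|[|[|k]]]]]]] ltk] //=;
  by do 6!rewrite big_ltn //; rewrite big_geq // ?addr0 ?add0r.
Qed.

Definition J_entry (i j : nat) : int := if i == j then (if (i.+1 == 7)%N then -1 else 1) else 0.

Definition R_lmx (j : nat) : lmx :=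
  let uj := nth 0 (u_lmx j) in
  lmx_of_fun (fun i k => (i == k)%:R - 2%:R * (uj i * sum7 (fun m => uj m * J_entry m k))).

Lemma RE j : (7 <= j <= 27)%N -> R j = mx_of_lmx (R_lmx j).
Proof.
move=> j_range; rewrite /R (uE j_range); apply/matrixP=> i k.
rewrite mx_of_lmx_of_fun !mxE big_ord1 !mxE -sum7E.
by congr (_ - _ * (_ * _)); apply: eq_bigr => m _; rewrite !mxE.
Qed.

Definition gen_lmx (p : seq bool * nat) : lmx :=
  lmx_mul (lmx_mul (lmx_mul (Kof_lmx p.1) (R_lmx p.2)) (Kof_lmx p.1)) (kmat_lmx p.2).

Definition gen_pairs : seq (seq bool * nat) :=
  [seq (bs, j) | bs <- bool_seqs 6, j <- iota 7 21].

Lemma mem_gen_pairs p : (p \in gen_pairs) = (size p.1 == 6%N) && (7 <= p.2 <= 27)%N.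
Proof.
case: p => bs j; apply/allpairsP/andP => [[[bs' j'] [/= bs'_in j'_in [-> ->]]]|[]].
  by rewrite -mem_bool_seqs -mem_iota.
by rewrite -mem_bool_seqs -mem_iota => bs_in j_in; exists (bs, j).
Qed.

Lemma HgensE h : Hgens h <-> exists2 p, p \in gen_pairs & h = mx_of_lmx (gen_lmx p).
Proof.
split=> [[s [j [j_range ->]]]|[[bs j]]].
  exists (signs_of s, j); first by rewrite mem_gen_pairs size_mkseq.
  by rewrite !mx_of_lmx_mul KofE RE // kmatE.
rewrite mem_gen_pairs => /andP [/eqP size_bs j_range] ->.
exists [ffun i : 'I_6 => nth false bs i], j; split => //.
by rewrite !mx_of_lmx_mul KofE signs_ofK // RE // kmatE.
Qed.

Definition A_lmx : lmx := [::
  [:: 1; 0; 0; 0; 0; 0; 0];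
  [:: 0; 1; 0; 0; 1; 0; -1];
  [:: 0; 0; 0; 0; 0; 1; 0];
  [:: 0; -1; 0; -1; 0; 0; 1];
  [:: 0; 0; 1; 0; 0; 0; 0];
  [:: 0; 0; 0; -1; -1; 0; 1];
  [:: 0; -1; 0; -1; -1; 0; 2]].

(* J A^T J, the inverse of the isometry A *)
Definition Ainv_lmx : lmx := [::
  [:: 1; 0; 0; 0; 0; 0; 0];
  [:: 0; 1; 0; -1; 0; 0; 1];
  [:: 0; 0; 0; 0; 1; 0; 0];
  [:: 0; 0; 0; -1; 0; -1; 1];
  [:: 0; 1; 0; 0; 0; -1; 1];
  [:: 0; 0; 1; 0; 0; 0; 0];
  [:: 0; 1; 0; -1; 0; -1; 2]].

Lemma AmatE : Amat = mx_of_lmx A_lmx.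
Proof. by []. Qed.

Definition letter := (seq int * lmx * lmx)%type.

(* The letter of a generator h = l R_j l k_j stores h^-1 = k_j l R_j l and the normal
   J l u_j of the mirror of l R_j l, so that <x, l u_j> = dot x (J l u_j). *)
Definition letter_of (p : seq bool * nat) : letter :=
  (mkseq (fun k => J_entry k k * (if (k < 6)%N && nth false p.1 k then -1 else 1)
                   * nth 0 (u_lmx p.2) k) 7,
   lmx_mul (lmx_mul (lmx_mul (kmat_lmx p.2) (Kof_lmx p.1)) (R_lmx p.2)) (Kof_lmx p.1),
   gen_lmx p).

(* l R_j l only depends on the signs of l on the support of u_j. *)
Definition reduced_pair (p : seq bool * nat) : bool :=
  all (fun i => (nth 0 (u_lmx p.2) i != 0) || ~~ nth false p.1 i) (iota 0 6).

Definition letters : seq letter :=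
  Eval vm_compute in map letter_of [seq p <- gen_pairs | reduced_pair p].

Lemma lettersE : letters = map letter_of [seq p <- gen_pairs | reduced_pair p].
Proof. by apply/eqP; vm_compute. Qed.

Definition last_col (g : lmx) : seq int := map (fun r => nth 0 r 6) g.

Definition dot (x y : seq int) : int := foldr (fun p s => p.1 * p.2 + s) 0 (zip x y).

Definition descent_letter (g : lmx) : option letter :=
  ohead [seq d <- letters | 0 < dot (last_col g) d.1.1].
Arguments descent_letter : simpl never.

Fixpoint descends (n : nat) (g : lmx) : bool :=
  (g == lmx1) ||
  if n is n'.+1 then
    if descent_letter g is Some d then descends n' (lmx_mul d.1.2 g) else false
  else false.

Lemma letters_inv : all (fun d : letter => lmx_mul d.2 d.1.2 == lmx1) letters.
Proof. by vm_compute. Qed.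

Lemma letters_one_mod2 : all (fun d : letter => one_mod2_lmx d.2) letters.
Proof. by vm_compute. Qed.

Lemma gen_pairs_letters :
  all (fun p => gen_lmx p \in [seq d.2 | d : letter <- letters]) gen_pairs.
Proof. by vm_compute. Qed.

Lemma letters_conj_A :
  all (fun d : letter => descends 10 (lmx_mul (lmx_mul A_lmx d.2) Ainv_lmx)) letters.
Proof. by vm_compute. Qed.

Lemma letter_gen d : d \in letters -> Hgens (mx_of_lmx d.2).
Proof.
rewrite lettersE => /mapP [p]; rewrite mem_filter => /andP [_ p_in] ->.
by apply/HgensE; exists p.
Qed.

Lemma letter_inv d : d \in letters -> mx_of_lmx d.2 * mx_of_lmx d.1.2 = 1.
Proof. by move=> d_in; rewrite -mx_of_lmx_mul (eqP (allP letters_inv d d_in)) mx_of_lmx1. Qed.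

Lemma Hgens_letter h : Hgens h -> exists2 d, d \in letters & h = mx_of_lmx d.2.
Proof.
case/HgensE=> p /(allP gen_pairs_letters) /mapP [d d_in gen_p] ->.
by exists d; rewrite ?gen_p.
Qed.

Lemma mx_unit_of_mul1 (M N : mat7) : M * N = 1 -> M \is a GRing.unit.
Proof. by case/mulmx1_unit. Qed.

Lemma Hgens_unit h : Hgens h -> h \is a GRing.unit.
Proof. by case/Hgens_letter=> d /letter_inv MN ->; apply: mx_unit_of_mul1 MN. Qed.

Lemma Hgens_one_mod2 h : Hgens h -> one_mod2 h.
Proof.
case/Hgens_letter=> d d_in ->.
by apply/one_mod2_lmxP; apply: (allP letters_one_mod2).
Qed.

Lemma descent_letter_mem g d : descent_letter g = Some d -> d \in letters.
Proof.
rewrite /descent_letter; case E: filter => [//|d' ds] [<-].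
by have := mem_head d' ds; rewrite -E mem_filter => /andP [].
Qed.

Lemma descends_sound n g : descends n g -> Hgrp (mx_of_lmx g).
Proof.
elim: n g => [|n IH] g /=; rewrite ?orbF.
  by move/eqP ->; rewrite mx_of_lmx1; apply: gen1.
case: eqP => [-> _|_ /=]; first by rewrite mx_of_lmx1; apply: gen1.
case E: (descent_letter g) => [d|//] /IH Hg.
have d_in := descent_letter_mem E.
rewrite -[mx_of_lmx g]mul1r -(letter_inv d_in) -mulrA -mx_of_lmx_mul.
exact: gen_mul (gen_gen (letter_gen d_in)) Hg.
Qed.

Definition Apow_lmx (r : nat) : lmx := iter r (lmx_mul A_lmx) lmx1.

Lemma A_lmx_inv : lmx_mul A_lmx Ainv_lmx = lmx1.
Proof. by apply/eqP; vm_compute. Qed.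

Lemma A8_descends : descends 10 (Apow_lmx 8).
Proof. by vm_compute. Qed.

Lemma Apow_not_one_mod2 : all (fun r => ~~ one_mod2_lmx (Apow_lmx r)) (iota 1 7).
Proof. by vm_compute. Qed.

Lemma A_unit : Amat \is a GRing.unit.
Proof.
apply: (@mx_unit_of_mul1 _ (mx_of_lmx Ainv_lmx)).
by rewrite -mx_of_lmx_mul A_lmx_inv mx_of_lmx1.
Qed.

Lemma AinvE : Amat^-1 = mx_of_lmx Ainv_lmx.
Proof. by rewrite -[RHS](mulKr A_unit) AmatE -mx_of_lmx_mul A_lmx_inv mx_of_lmx1 mulr1. Qed.

Lemma AexpE r : Amat ^+ r = mx_of_lmx (Apow_lmx r).
Proof.
elim: r => [|r IH]; first by rewrite expr0 mx_of_lmx1.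
by rewrite exprS IH /Apow_lmx iterS mx_of_lmx_mul.
Qed.

Lemma conj_A_Hgens h : Hgens h -> Hgrp (Amat * h * Amat^-1).
Proof.
case/Hgens_letter=> d d_in ->; rewrite AinvE AmatE -!mx_of_lmx_mul.
exact: descends_sound (allP letters_conj_A d d_in).
Qed.

Lemma A_exp8 : Hgrp (Amat ^+ 8).
Proof. by rewrite AexpE; apply: descends_sound A8_descends. Qed.

Lemma A_exp_notin r : (0 < r < 8)%N -> ~ Hgrp (Amat ^+ r).
Proof.
move=> r_range /(gen_one_mod2 Hgens_unit Hgens_one_mod2).
rewrite AexpE => /one_mod2_lmxP; apply/negP.
by apply: (allP Apow_not_one_mod2); rewrite mem_iota.
Qed.

Theorem lemma8p5 :
  normal_in Hgrp Gamma /\ quotient_cyclic_gen Gamma Hgrp Amat 8.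
Proof.
split; first exact: normal_in_gen_cyclic Hgens_unit A_unit conj_A_Hgens _ A_exp8.
split; first exact: gen_cyclic_coset Hgens_unit A_unit conj_A_Hgens _ A_exp8.
exact: gen_exp_dvdn Hgens_unit A_unit _ A_exp8 A_exp_notin.
Qed.
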